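(* Let $(G,u)$ be a unital po-group and $m:G\to\mathbb R$ a group homomorphism (signed measure on $G$). Then $m$ is relatively bounded if and only if $m$ is bounded on the interval $[0,nu]=\{g\in G:0\le g\le nu\}$ for every integer $n\ge1$. If, in addition, $G$ satisfies (RDP), then $m$ is relatively bounded if and only if $m$ is bounded on $[0,u]$.
   Context: A po-group is a (not necessarily Abelian) group $G$ with a partial order $\le$ such that $a\le b$ implies $x+a+y\le x+b+y$ for all $x,y$; $G^+$ is its positive cone. An element $u\in G^+$ is a strong unit if for every $g\in G$ there is $n\ge1$ with $g\le nu$; $(G,u)$ is then a unital po-group. A map $m:G\to\mathbb R$ is relatively bounded if for every subset $W\subseteq G$ bounded above and below in $G$, the set $m(W)$ is bounded in $\mathbb R$. $G$ satisfies (RDP) if for all $a_1,a_2,b_1,b_2\in G^+$ with $a_1+a_2=b_1+b_2$ there exist $d_1,d_2,d_3,d_4\in G^+$ with $d_1+d_2=a_1$, $d_3+d_4=a_2$, $d_1+d_3=b_1$, $d_2+d_4=b_2$. *)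

From Stdlib Require Import Reals.
Open Scope R_scope.

Record POGroup := {
  carrier :> Type;
  gadd : carrier -> carrier -> carrier;
  gzero : carrier;
  gopp : carrier -> carrier;
  gle : carrier -> carrier -> Prop;
  gaddA : forall x y z, gadd x (gadd y z) = gadd (gadd x y) z;
  gadd0l : forall x, gadd gzero x = x;
  gadd0r : forall x, gadd x gzero = x;
  gaddNl : forall x, gadd (gopp x) x = gzero;
  gaddNr : forall x, gadd x (gopp x) = gzero;
  gle_refl : forall x, gle x x;
  gle_antisym : forall x y, gle x y -> gle y x -> x = y;
  gle_trans : forall x y z, gle x y -> gle y z -> gle x z;
  gle_add : forall a b x y, gle a b -> gle (gadd x (gadd a y)) (gadd x (gadd b y))
}.

Arguments gadd {p}.
Arguments gzero {p}.
Arguments gopp {p}.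
Arguments gle {p}.

Fixpoint gnmul {G : POGroup} (n : nat) (u : G) : G :=
  match n with
  | O => gzero
  | S k => gadd u (gnmul k u)
  end.

Definition positive_cone {G : POGroup} (g : G) : Prop := gle gzero g.

Definition strong_unit {G : POGroup} (u : G) : Prop :=
  positive_cone u /\ forall g : G, exists n : nat, (1 <= n)%nat /\ gle g (gnmul n u).

Definition group_hom {G : POGroup} (m : G -> R) : Prop :=
  forall x y : G, m (gadd x y) = m x + m y.

Definition order_bounded {G : POGroup} (W : G -> Prop) : Prop :=
  exists a b : G, forall w, W w -> gle a w /\ gle w b.

Definition bounded_on {G : POGroup} (m : G -> R) (W : G -> Prop) : Prop :=
  exists M : R, forall w, W w -> Rabs (m w) <= M.

Definition relatively_bounded {G : POGroup} (m : G -> R) : Prop :=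
  forall W : G -> Prop, order_bounded W -> bounded_on m W.

Definition interval {G : POGroup} (a b : G) : G -> Prop :=
  fun g => gle a g /\ gle g b.

Definition RDP (G : POGroup) : Prop :=
  forall a1 a2 b1 b2 : G,
    positive_cone a1 -> positive_cone a2 -> positive_cone b1 -> positive_cone b2 ->
    gadd a1 a2 = gadd b1 b2 ->
    exists d1 d2 d3 d4 : G,
      positive_cone d1 /\ positive_cone d2 /\ positive_cone d3 /\ positive_cone d4 /\
      gadd d1 d2 = a1 /\ gadd d3 d4 = a2 /\ gadd d1 d3 = b1 /\ gadd d2 d4 = b2.

(* The first equivalence is a translation argument: every order-bounded set
   lies in some interval [a, b], the left translate -a + [a, b] lies in
   [0, -a + b], and the strong unit puts -a + b below some n u.  Under (RDP)
   every element of [0, u + n u] splits as d1 + d2 with d1 in [0, u] and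
   d2 in [0, n u], so a bound on [0, u] propagates to [0, n u] by induction. *)
From Stdlib Require Import Reals Lra.
Open Scope R_scope.

Section POGroupFacts.

Variable G : POGroup.

Lemma gle_addl (x a b : G) : gle a b -> gle (gadd x a) (gadd x b).
Proof.
  intro Hab. pose proof (gle_add G a b x gzero Hab) as H.
  now rewrite !gadd0r in H.
Qed.

Lemma gle_addr (x a b : G) : gle a b -> gle (gadd a x) (gadd b x).
Proof.
  intro Hab. pose proof (gle_add G a b gzero x Hab) as H.
  now rewrite !gadd0l in H.
Qed.

Lemma gle_addl_ge0 (x d : G) : positive_cone d -> gle x (gadd x d).
Proof.
  intro Hd. pose proof (gle_addl x gzero d Hd) as H.
  now rewrite gadd0r in H.
Qed.

Lemma subr_ge0 (a b : G) : gle a b -> positive_cone (gadd (gopp a) b).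
Proof.
  intro Hab. pose proof (gle_addl (gopp a) a b Hab) as H.
  now rewrite gaddNl in H.
Qed.

Lemma gnmul1 (u : G) : gnmul 1 u = u.
Proof. apply gadd0r. Qed.

Lemma gnmul_ge0 (u : G) (n : nat) : positive_cone u -> positive_cone (gnmul n u).
Proof.
  intro Hu. induction n as [|n IHn]; simpl.
  - apply gle_refl.
  - eapply gle_trans; [exact IHn|].
    pose proof (gle_addr (gnmul n u) gzero u Hu) as H.
    now rewrite gadd0l in H.
Qed.

Lemma interval_shift (a b w : G) :
  interval a b w -> interval gzero (gadd (gopp a) b) (gadd (gopp a) w).
Proof.
  intros [Haw Hwb]. split.
  - now apply subr_ge0.
  - now apply gle_addl.
Qed.

Lemma RDP_interval_split (b1 b2 g : G) :
  RDP G -> positive_cone b1 -> positive_cone b2 ->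
  interval gzero (gadd b1 b2) g ->
  exists d1 d2, interval gzero b1 d1 /\ interval gzero b2 d2 /\ g = gadd d1 d2.
Proof.
  intros Hrdp Hb1 Hb2 [Hg Hgb].
  assert (Hsplit : gadd g (gadd (gopp g) (gadd b1 b2)) = gadd b1 b2).
  { now rewrite gaddA, gaddNr, gadd0l. }
  destruct (Hrdp g _ b1 b2 Hg (subr_ge0 _ _ Hgb) Hb1 Hb2 Hsplit)
    as [d1 [d2 [d3 [d4 [P1 [P2 [P3 [P4 [E1 [_ [E3 E4]]]]]]]]]]].
  exists d1, d2. split; [|split].
  - split; [exact P1|]. rewrite <- E3. now apply gle_addl_ge0.
  - split; [exact P2|]. rewrite <- E4. now apply gle_addl_ge0.
  - now symmetry.
Qed.

End POGroupFacts.

Section BoundedMeasure.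

Variables (G : POGroup) (m : G -> R).
Hypothesis m_hom : group_hom m.

Lemma group_hom0 : m gzero = 0.
Proof. pose proof (m_hom gzero gzero) as H. rewrite gadd0l in H. lra. Qed.

Lemma bounded_on_sub (W V : G -> Prop) :
  (forall w, W w -> V w) -> bounded_on m V -> bounded_on m W.
Proof. intros HWV [M HM]. exists M. auto. Qed.

Lemma bounded_on_interval_shift (a b : G) :
  bounded_on m (interval gzero (gadd (gopp a) b)) -> bounded_on m (interval a b).
Proof.
  intros [M HM]. exists (M + Rabs (m (gopp a))). intros w Hw.
  pose proof (HM _ (interval_shift G a b w Hw)) as Hbound.
  rewrite m_hom in Hbound.
  pose proof (Rabs_triang (m (gopp a) + m w) (- m (gopp a))) as T.
  replace (m (gopp a) + m w + - m (gopp a)) with (m w) in T by ring.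
  rewrite Rabs_Ropp in T. lra.
Qed.

Lemma relatively_boundedP :
  relatively_bounded m <-> forall a b : G, bounded_on m (interval a b).
Proof.
  split.
  - intros Hrel a b. apply Hrel. exists a, b. auto.
  - intros Hint W [a [b Hab]]. exact (bounded_on_sub _ _ Hab (Hint a b)).
Qed.

Lemma relatively_bounded_strong_unit (u : G) :
  strong_unit u ->
  (relatively_bounded m <->
     (forall n : nat, (1 <= n)%nat -> bounded_on m (interval gzero (gnmul n u)))).
Proof.
  intros [_ Hunit]. rewrite relatively_boundedP. split.
  - intros Hint n _. apply Hint.
  - intros Hbnd a b.
    destruct (Hunit (gadd (gopp a) b)) as [n [Hn Hle]].
    apply bounded_on_interval_shift.
    apply (bounded_on_sub _ (interval gzero (gnmul n u))); [|exact (Hbnd n Hn)].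
    intros w [Hw0 Hw]. split; [exact Hw0|]. exact (gle_trans G _ _ _ Hw Hle).
Qed.

Lemma bounded_on_interval_add (b1 b2 : G) :
  RDP G -> positive_cone b1 -> positive_cone b2 ->
  bounded_on m (interval gzero b1) -> bounded_on m (interval gzero b2) ->
  bounded_on m (interval gzero (gadd b1 b2)).
Proof.
  intros Hrdp Hb1 Hb2 [M1 HM1] [M2 HM2]. exists (M1 + M2). intros g Hg.
  destruct (RDP_interval_split G b1 b2 g Hrdp Hb1 Hb2 Hg) as [d1 [d2 [Hd1 [Hd2 ->]]]].
  rewrite m_hom. pose proof (Rabs_triang (m d1) (m d2)).
  pose proof (HM1 _ Hd1). pose proof (HM2 _ Hd2). lra.
Qed.

Lemma bounded_on_interval_gnmul (u : G) (n : nat) :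
  RDP G -> positive_cone u ->
  bounded_on m (interval gzero u) -> bounded_on m (interval gzero (gnmul n u)).
Proof.
  intros Hrdp Hu Hbnd. induction n as [|n IHn].
  - exists 0. intros w [Hw0 Hw]. simpl in Hw.
    rewrite (gle_antisym G w gzero Hw Hw0), group_hom0, Rabs_R0. lra.
  - exact (bounded_on_interval_add u _ Hrdp Hu (gnmul_ge0 G u n Hu) Hbnd IHn).
Qed.

End BoundedMeasure.

Theorem lemma3p2 (G : POGroup) (u : G) (m : G -> R) :
  strong_unit u -> group_hom m ->
  (relatively_bounded m <->
     (forall n : nat, (1 <= n)%nat -> bounded_on m (interval gzero (gnmul n u))))
  /\
  (RDP G -> (relatively_bounded m <-> bounded_on m (interval gzero u))).
Proof.
  intros Hunit Hm.
  pose proof (relatively_bounded_strong_unit G m Hm u Hunit) as Hintervals.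
  split; [exact Hintervals|].
  intro Hrdp. rewrite Hintervals. split.
  - intro Hbnd. rewrite <- (gnmul1 G u). now apply Hbnd.
  - intros Hbnd n _. exact (bounded_on_interval_gnmul G m Hm u n Hrdp (proj1 Hunit) Hbnd).
Qed.
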